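(* Let $n\ge2$, $D_0>0$ and $\alpha>(n-1)\beta\ge0$, and let $p^a\in\mathbb{R}^n_{\ge0}$. For each fixed payment vector $\bar p^d=(p^d_2,\dots,p^d_n)\in\mathbb{R}^{n-1}$, the collusion game described below has a unique pure-strategy Nash equilibrium. It has the following properties. - The colluding pair's price is $$p_1=p^s_1+p^c_1=-\frac{p^a_1}{2}+\frac{D_0}{2(\alpha-(n-1)\beta)}.$$ - For $i=2,\dots,n$, $p^s_i=g_i-p^d_i$ and $p^c_i=h_i+p^d_i$, where the constants $g_i,h_i$ depend only on $p^a,D_0,\alpha,\beta$. - The equilibrium demand vector, the revenues per unit demand, and hence the total revenues of the colluding pair and of the other CPs, do not depend on $\bar p^d$. Thus the equilibrium is unique up to a free choice of $\bar p^d$.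
   Context: One ISP and $n$ CPs, where CP 1 has an exclusive contract with the ISP. The ISP together with CP 1 forms a single ''colluding pair'' player $\overline{ISP}$, which chooses the vector $$\bar p^s=(p_1,p^s_2,\dots,p^s_n),\qquad p_1=p^s_1+p^c_1,$$ where $p_1$ is the price charged to internauts of CP 1. Each CP $i\ge2$ chooses $p^c_i\in\mathbb{R}$. The payments $p^d_i$ ($i\ge2$) from CP $i$ to the ISP are fixed beforehand by a regulator (ex ante regulation). $p^a_i\ge0$ are advertising revenues per unit demand. With $p_i=p^s_i+p^c_i$ and $D_i=D_0-\alpha p_i+\beta\sum_{j\ne i}p_j$, the payoffs are $$U_{\overline{ISP}}=D_1(p_1+p^a_1)+\sum_{i\ge2}D_i(p^s_i+p^d_i),\qquad U_{CP,i}=D_i(p^c_i+p^a_i-p^d_i)\ \ (i\ge2),$$ and all strategies range over the reals. *)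

(* Players: index ord0 of 'I_(m.+1) is CP 1 (the colluding
   CP); the other CPs i = 2..n are indexed by j : 'I_m via lift ord0 j.
   Total number of CPs is n = m.+1. *)
From HB Require Import structures.
From mathcomp Require Import all_boot all_order all_algebra.
Set Implicit Arguments. Unset Strict Implicit. Unset Printing Implicit Defensive.
Import Order.TTheory GRing.Theory Num.Theory.
Local Open Scope ring_scope.

Section Game.
Variables (R : realFieldType) (m : nat).

Definition price (p1 : R) (ps pc : 'I_m -> R) (i : 'I_m.+1) : R :=
  match unlift ord0 i with
  | None => p1
  | Some j => ps j + pc j
  end.

Definition demand (D0 alpha beta : R) (p : 'I_m.+1 -> R) (i : 'I_m.+1) : R :=
  D0 - alpha * p i + beta * \sum_(k < m.+1 | k != i) p k.

Definition U_pair (D0 alpha beta : R) (pa : 'I_m.+1 -> R) (pd : 'I_m -> R)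
    (p1 : R) (ps pc : 'I_m -> R) : R :=
  let D := demand D0 alpha beta (price p1 ps pc) in
  D ord0 * (p1 + pa ord0) + \sum_(j < m) D (lift ord0 j) * (ps j + pd j).

(* payoff of CP j (i.e. CP number j+2) *)
Definition U_cp (D0 alpha beta : R) (pa : 'I_m.+1 -> R) (pd : 'I_m -> R)
    (p1 : R) (ps pc : 'I_m -> R) (j : 'I_m) : R :=
  demand D0 alpha beta (price p1 ps pc) (lift ord0 j)
    * (pc j + pa (lift ord0 j) - pd j).

Definition upd (pc : 'I_m -> R) (j : 'I_m) (c : R) : 'I_m -> R :=
  fun k => if k == j then c else pc k.

Definition is_NE (D0 alpha beta : R) (pa : 'I_m.+1 -> R) (pd : 'I_m -> R)
    (p1 : R) (ps pc : 'I_m -> R) : Prop :=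
  (forall (p1' : R) (ps' : 'I_m -> R),
      U_pair D0 alpha beta pa pd p1' ps' pc <= U_pair D0 alpha beta pa pd p1 ps pc)
  /\ (forall (j : 'I_m) (c : R),
      U_cp D0 alpha beta pa pd p1 ps (upd pc j c) j
        <= U_cp D0 alpha beta pa pd p1 ps pc j).

End Game.

(* CP i's price p^c_i enters the pair's payoff only through p_i, so by
   choosing p^s the pair in effect chooses the whole consumer price vector p; its payoff is then a
   quadratic in p that is strictly concave because alpha > (n-1) beta, with
   unique maximiser p_i = [base_price] - c_i/2, where c_i is what the pair earns per unit
   of D_i on top of p_i.  Each CP's payoff is a concave parabola in p^c_i,
   maximised exactly when D_i = alpha (p^c_i + p^a_i - p^d_i).  At the pair's
   optimum these conditions become the linear system
   (3 alpha + beta) r_j - beta (sum_k r_k) = const_j in the markups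
   r_j = p^c_j - p^d_j, whose unique solution does not involve p^d; prices,
   demands and per-unit revenues depend on p^d only through r and p^s + p^d. *)

From HB Require Import structures.
From mathcomp Require Import all_boot all_order all_algebra.
From mathcomp Require Import ring lra.
Set Implicit Arguments. Unset Strict Implicit. Unset Printing Implicit Defensive.
Import Order.TTheory GRing.Theory Num.Theory.
Local Open Scope ring_scope.

Section Quadratic.
Variable R : realFieldType.

Lemma sumr_affine n (x y z : 'I_n -> R) (a b d f : R) :
  \sum_i (a * x i + b * y i + d * z i + f)
  = a * \sum_i x i + b * \sum_i y i + d * \sum_i z i + n%:R * f.
Proof. by rewrite !big_split /= -!mulr_sumr sumr_const card_ord mulr_natl. Qed.

Lemma sqr_sum_le n (e : 'I_n -> R) : (\sum_i e i) ^+ 2 <= n%:R * \sum_i e i ^+ 2.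
Proof.
case: n e => [|n] e; first by rewrite !big_ord0 expr0n mul0r.
set E := \sum_i e i; set S := \sum_i e i ^+ 2.
have : 0 <= \sum_i (n.+1%:R * e i - E) ^+ 2 by apply: sumr_ge0 => i _; exact: sqr_ge0.
rewrite (eq_bigr (fun i => n.+1%:R ^+ 2 * e i ^+ 2 + (- 2 * n.+1%:R * E) * e i + 0 * e i + E ^+ 2));
  last by move=> i _; ring.
rewrite sumr_affine -/E -/S => h.
rewrite -subr_ge0 -(pmulr_rge0 _ (ltr0Sn _ n)).
by move: h; congr (_ <= _); ring.
Qed.

Lemma profit_maxP (al G a y : R) : 0 < al ->
  (forall x, (G - al * x) * (x + a) <= (G - al * y) * (y + a))
  <-> G - al * y = al * (y + a).
Proof.
move=> al_gt0; set d := G - al * y - al * (y + a).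
have gap x : (G - al * y) * (y + a) - (G - al * x) * (x + a)
             = al * (x - y) ^+ 2 - (x - y) * d by rewrite /d; ring.
split=> [ymax | foc x].
- (* deviate to the vertex of the parabola *)
  have := ymax (y + d / (2 * al)); rewrite -subr_ge0 gap.
  have -> : al * (y + d / (2 * al) - y) ^+ 2 - (y + d / (2 * al) - y) * d
            = - (d ^+ 2 / (4 * al)) by field; rewrite gt_eqF.
  rewrite oppr_ge0 pmulr_lle0 ?invr_gt0 ?mulr_gt0 // => d2_le0.
  by apply/eqP; rewrite -subr_eq0 -sqrf_eq0 eq_le d2_le0 sqr_ge0.
- rewrite -subr_ge0 gap.
  have -> : d = 0 by rewrite /d foc subrr.
  by rewrite mulr0 subr0 mulr_ge0 ?sqr_ge0 // ltW.
Qed.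

Lemma sum_shift_systemP n (a b : R) (v r : 'I_n -> R) :
  a != 0 -> a - n%:R * b != 0 ->
  (forall j, a * r j - b * \sum_k r k = v j)
  <-> (forall j, r j = (v j + b * ((\sum_k v k) / (a - n%:R * b))) / a).
Proof.
move=> a_neq0 an_neq0; set S := (\sum_k v k) / _.
split=> [sys j | sol j].
- have sumr : \sum_k r k = S.
    have : \sum_k (a * r k - b * \sum_k r k) = \sum_k v k by apply: eq_bigr => k _.
    rewrite sumrB -mulr_sumr sumr_const card_ord -mulr_natl => hsum.
    by rewrite /S -hsum; field.
  by rewrite -sys sumr; field.
- have sumr : \sum_k r k = S.
    rewrite (eq_bigr _ (fun k _ => sol k)) -mulr_suml big_split /= -mulr_sumr.
    by rewrite sumr_const card_ord -mulr_natl /S; field; rewrite an_neq0.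
  by rewrite sumr sol; field.
Qed.

Section Revenue.
Variables (n : nat) (D0 al be : R).

Definition revenue (q c : 'I_n -> R) : R :=
  \sum_i (D0 - (al + be) * q i + be * \sum_k q k) * (q i + c i).

Lemma eq_revenue (q q' c : 'I_n -> R) : q =1 q' -> revenue q c = revenue q' c.
Proof.
by move=> eq_q; apply: eq_bigr => i _; rewrite (eq_bigr _ (fun k _ => eq_q k)) eq_q.
Qed.

Variable K : R.
Hypothesis K_foc : 2 * K * (al + be - n%:R * be) = D0.

Lemma revenue_gap (q c : 'I_n -> R) :
  revenue (fun i => K - c i / 2) c - revenue q c
  = (al + be) * \sum_i (q i - (K - c i / 2)) ^+ 2
    - be * (\sum_i (q i - (K - c i / 2))) ^+ 2.
Proof.
pose x i := q i - (K - c i / 2).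
set C := \sum_i c i; set E := \sum_i x i.
have sum_opt : \sum_i (K - c i / 2) = n%:R * K - C / 2.
  rewrite (eq_bigr (fun i => 0 * c i + 0 * c i + (- 1 / 2) * c i + K)); last by move=> i _; ring.
  by rewrite sumr_affine -/C; ring.
have sum_q : \sum_i q i = n%:R * K - C / 2 + E.
  rewrite (eq_bigr (fun i => 1 * x i + 0 * c i + (- 1 / 2) * c i + K)); last by move=> i _; rewrite /x; ring.
  by rewrite sumr_affine -/C -/E; ring.
pose M := D0 - 2 * (al + be) * K + be * (n%:R * K - C / 2).
rewrite /revenue -sumrB sum_opt sum_q.
rewrite (eq_bigr (fun i => (al + be) * x i ^+ 2 + (- (be * E + M)) * x i
                           + (- be * E / 2) * c i + (- be * E * K)));
  last by move=> i _; rewrite /M /x; field.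
by rewrite sumr_affine -/C -/E /M -K_foc; field.
Qed.

Hypotheses (be_ge0 : 0 <= be) (concave : 0 < al + be - n%:R * be).

Lemma revenue_maxP (q c : 'I_n -> R) :
  (forall q', revenue q' c <= revenue q c) <-> (forall i, q i = K - c i / 2).
Proof.
have gap_ge q' : (al + be - n%:R * be) * \sum_i (q' i - (K - c i / 2)) ^+ 2
                 <= revenue (fun i => K - c i / 2) c - revenue q' c.
  rewrite revenue_gap -subr_ge0.
  have := ler_wpM2l be_ge0 (sqr_sum_le (fun i => q' i - (K - c i / 2))).
  by rewrite -subr_ge0; congr (_ <= _); ring.
split=> [qmax i | qopt q'].
- have : (al + be - n%:R * be) * \sum_i (q i - (K - c i / 2)) ^+ 2 <= 0.
    by apply: le_trans (gap_ge q) _; rewrite subr_le0.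
  rewrite pmulr_rle0 // => sum_le0.
  have /psumr_eq0P sq_eq0 : \sum_i (q i - (K - c i / 2)) ^+ 2 = 0.
    by apply/eqP; rewrite eq_le sum_le0 sumr_ge0 // => k _; exact: sqr_ge0.
  by apply/eqP; rewrite -subr_eq0 -sqrf_eq0; apply/eqP/sq_eq0 => // k _; exact: sqr_ge0.
- rewrite (eq_revenue c qopt) -subr_ge0; apply: le_trans (gap_ge q').
  by apply: mulr_ge0; [exact: ltW | apply: sumr_ge0 => i _; exact: sqr_ge0].
Qed.

End Revenue.

End Quadratic.

Section Equilibrium.
Variables (R : realFieldType) (m : nat) (D0 alpha beta : R) (pa : 'I_m.+1 -> R).

Lemma price0 (p1 : R) (ps pc : 'I_m -> R) : price p1 ps pc ord0 = p1.
Proof. by rewrite /price unlift_none. Qed.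

Lemma priceS (p1 : R) (ps pc : 'I_m -> R) j : price p1 ps pc (lift ord0 j) = ps j + pc j.
Proof. by rewrite /price liftK. Qed.

Lemma price_onto (pc : 'I_m -> R) (q : 'I_m.+1 -> R) :
  price (q ord0) (fun j => q (lift ord0 j) - pc j) pc =1 q.
Proof. by move=> i; case: (unliftP ord0 i) => [j|] ->; rewrite ?price0 ?priceS ?subrK. Qed.

Lemma demandE (p : 'I_m.+1 -> R) i :
  demand D0 alpha beta p i = D0 - (alpha + beta) * p i + beta * \sum_k p k.
Proof. by rewrite /demand [\sum_k p k](bigD1 i) //=; ring. Qed.

(* The pair earns [price i + pair_offset i] per unit of demand for CP [i]. *)
Definition pair_offset (pd pc : 'I_m -> R) (i : 'I_m.+1) : R :=
  match unlift ord0 i with None => pa ord0 | Some j => pd j - pc j end.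

Lemma pair_offset0 pd pc : pair_offset pd pc ord0 = pa ord0.
Proof. by rewrite /pair_offset unlift_none. Qed.

Lemma pair_offsetS pd pc j : pair_offset pd pc (lift ord0 j) = pd j - pc j.
Proof. by rewrite /pair_offset liftK. Qed.

Lemma U_pair_revenue pd p1 (ps pc : 'I_m -> R) :
  U_pair D0 alpha beta pa pd p1 ps pc
  = revenue D0 alpha beta (price p1 ps pc) (pair_offset pd pc).
Proof.
rewrite /U_pair /revenue big_ord_recl demandE price0 pair_offset0; congr (_ + _).
by apply: eq_bigr => j _; rewrite demandE priceS pair_offsetS; congr (_ * _); ring.
Qed.

Lemma demand_upd p1 (ps pc : 'I_m -> R) j x :
  demand D0 alpha beta (price p1 ps (upd pc j x)) (lift ord0 j)
  = demand D0 alpha beta (price p1 ps pc) (lift ord0 j) - alpha * (x - pc j).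
Proof.
rewrite /demand !priceS /upd eqxx.
rewrite (eq_bigr (fun k => price p1 ps pc k)); first by ring.
move=> k; case: (unliftP ord0 k) => [i|] ->; rewrite ?price0 // !priceS.
by rewrite (inj_eq lift_inj) /upd => /negPf ->.
Qed.

Hypotheses (beta_ge0 : 0 <= beta) (beta_lt_alpha : m%:R * beta < alpha).

Let alpha_gt0 : 0 < alpha.
Proof. by apply: le_lt_trans beta_lt_alpha; rewrite mulr_ge0. Qed.

Lemma cp_best_responseP pd p1 (ps pc : 'I_m -> R) j :
  (forall x, U_cp D0 alpha beta pa pd p1 ps (upd pc j x) j
             <= U_cp D0 alpha beta pa pd p1 ps pc j)
  <-> demand D0 alpha beta (price p1 ps pc) (lift ord0 j)
      = alpha * (pc j + pa (lift ord0 j) - pd j).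
Proof.
set D := demand _ _ _ _ (lift ord0 j); set a := pa (lift ord0 j) - pd j.
have U_cpE x : U_cp D0 alpha beta pa pd p1 ps (upd pc j x) j
               = (D + alpha * pc j - alpha * x) * (x + a).
  by rewrite /U_cp demand_upd /upd eqxx /a -/D; ring.
have -> : U_cp D0 alpha beta pa pd p1 ps pc j = (D + alpha * pc j - alpha * pc j) * (pc j + a).
  by rewrite /U_cp /a -/D; ring.
apply: iff_trans (iff_trans (profit_maxP (D + alpha * pc j) a (pc j) alpha_gt0) _).
  by split=> h x; have := h x; rewrite U_cpE.
by rewrite addrK /a addrA.
Qed.

Definition base_price : R := D0 / (2 * (alpha - m%:R * beta)).

Lemma base_price_foc : 2 * base_price * (alpha + beta - m.+1%:R * beta) = D0.
Proof. by rewrite /base_price -natr1; field; rewrite subr_eq0 gt_eqF. Qed.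

Lemma pair_best_responseP pd p1 (ps pc : 'I_m -> R) :
  (forall p1' ps', U_pair D0 alpha beta pa pd p1' ps' pc
                   <= U_pair D0 alpha beta pa pd p1 ps pc)
  <-> (forall i, price p1 ps pc i = base_price - pair_offset pd pc i / 2).
Proof.
have concave : 0 < alpha + beta - m.+1%:R * beta.
  by have := beta_lt_alpha; lra.
have revP := revenue_maxP base_price_foc beta_ge0 concave (price p1 ps pc) (pair_offset pd pc).
split=> [pmax | popt p1' ps'].
- apply/revP => q; rewrite -(eq_revenue _ _ _ _ (price_onto pc q)) -!U_pair_revenue; exact: pmax.
- by rewrite !U_pair_revenue; apply: revP.2.
Qed.

Definition cp_target (j : 'I_m) : R := D0 - beta * pa ord0 - 2 * alpha * pa (lift ord0 j).

Lemma cp_foc_at_pair_opt pd p1 (ps pc : 'I_m -> R) j :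
  (forall i, price p1 ps pc i = base_price - pair_offset pd pc i / 2) ->
  demand D0 alpha beta (price p1 ps pc) (lift ord0 j) = alpha * (pc j + pa (lift ord0 j) - pd j)
  <-> (3 * alpha + beta) * (pc j - pd j) - beta * \sum_k (pc k - pd k) = cp_target j.
Proof.
move=> popt; set S := \sum_k (pc k - pd k).
have sum_price : \sum_k price p1 ps pc k = m.+1%:R * base_price - pa ord0 / 2 + S / 2.
  rewrite (eq_bigr _ (fun k _ => popt k)) big_ord_recl pair_offset0.
  rewrite (eq_bigr (fun k => 0 * (pc k - pd k) + 0 * (pc k - pd k) + (1 / 2) * (pc k - pd k)
                             + base_price)); last by move=> k _; rewrite pair_offsetS; ring.
  by rewrite sumr_affine -/S -natr1; ring.
have := base_price_foc; rewrite demandE popt sum_price pair_offsetS /cp_target.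
by move=> foc; split=> h; lra.
Qed.

Definition eq_markup (j : 'I_m) : R :=
  (cp_target j + beta * ((\sum_k cp_target k) / (3 * alpha + beta - m%:R * beta)))
  / (3 * alpha + beta).

Lemma is_NE_iff pd p1 (ps pc : 'I_m -> R) :
  is_NE D0 alpha beta pa pd p1 ps pc
  <-> p1 = base_price - pa ord0 / 2
      /\ forall j, ps j = base_price - eq_markup j / 2 - pd j /\ pc j = eq_markup j + pd j.
Proof.
have [a_gt0 an_gt0] : 0 < 3 * alpha + beta /\ 0 < 3 * alpha + beta - m%:R * beta.
  by move: alpha_gt0 beta_ge0 beta_lt_alpha => *; split; lra.
have markupP := sum_shift_systemP cp_target (fun j => pc j - pd j)
  (lt0r_neq0 a_gt0) (lt0r_neq0 an_gt0).
split=> [[pair_br cp_br] | [p1E markupE]].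
- have popt := (pair_best_responseP pd p1 ps pc).1 pair_br.
  have {}markupE j : pc j - pd j = eq_markup j.
    move: j; apply/markupP => j.
    exact/(cp_foc_at_pair_opt _ popt)/cp_best_responseP/cp_br.
  split=> [|j]; first by have := popt ord0; rewrite price0 pair_offset0.
  have := popt (lift ord0 j); rewrite priceS pair_offsetS.
  by have := markupE j; split; lra.
- have popt : forall i, price p1 ps pc i = base_price - pair_offset pd pc i / 2.
    move=> i; case: (unliftP ord0 i) => [j|] ->; rewrite ?price0 ?pair_offset0 ?p1E //.
    by rewrite priceS pair_offsetS (markupE j).1 (markupE j).2; lra.
  split=> [|j]; first exact/pair_best_responseP.
  apply/cp_best_responseP/(cp_foc_at_pair_opt _ popt); move: j; apply/markupP => j.
  by rewrite (markupE j).2 addrK.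
Qed.

Lemma NE_invariant pd pd' p1 p1' (ps pc ps' pc' : 'I_m -> R) :
  is_NE D0 alpha beta pa pd p1 ps pc -> is_NE D0 alpha beta pa pd' p1' ps' pc' ->
  p1 = p1' /\ forall j, ps j + pd j = ps' j + pd' j /\ pc j - pd j = pc' j - pd' j.
Proof.
move=> /is_NE_iff[-> psE] /is_NE_iff[-> psE']; split=> // j.
by rewrite (psE j).1 (psE j).2 (psE' j).1 (psE' j).2; split; ring.
Qed.

Lemma NE_demand_invariant pd pd' p1 p1' (ps pc ps' pc' : 'I_m -> R) :
  is_NE D0 alpha beta pa pd p1 ps pc -> is_NE D0 alpha beta pa pd' p1' ps' pc' ->
  demand D0 alpha beta (price p1 ps pc) =1 demand D0 alpha beta (price p1' ps' pc').
Proof.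
move=> NE NE'; have [p1E psE] := NE_invariant NE NE'.
have priceE : price p1 ps pc =1 price p1' ps' pc'.
  move=> i; case: (unliftP ord0 i) => [j|] ->; rewrite ?price0 ?priceS //.
  by have := psE j; lra.
by move=> i; rewrite !demandE priceE (eq_bigr _ (fun k _ => priceE k)).
Qed.

End Equilibrium.

Theorem theorem5 (R : realFieldType) (m : nat) (hm : (1 <= m)%N)
    (D0 alpha beta : R) (pa : 'I_m.+1 -> R)
    (hD0 : 0 < D0) (hb : 0 <= beta) (hab : m%:R * beta < alpha)
    (hpa : forall i, 0 <= pa i) :
  exists g h : 'I_m -> R,
    (forall pd : 'I_m -> R,
      (* existence *)
      (exists (p1 : R) (ps pc : 'I_m -> R), is_NE D0 alpha beta pa pd p1 ps pc)
      (* uniqueness *)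
      /\ (forall (p1 p1' : R) (ps pc ps' pc' : 'I_m -> R),
            is_NE D0 alpha beta pa pd p1 ps pc ->
            is_NE D0 alpha beta pa pd p1' ps' pc' ->
            p1 = p1' /\ (forall j, ps j = ps' j /\ pc j = pc' j))
      (* explicit form *)
      /\ (forall (p1 : R) (ps pc : 'I_m -> R),
            is_NE D0 alpha beta pa pd p1 ps pc ->
            p1 = - pa ord0 / 2 + D0 / (2 * (alpha - m%:R * beta))
            /\ (forall j, ps j = g j - pd j /\ pc j = h j + pd j)))
    (* demands, per-unit revenues and total revenues independent of pd *)
    /\ (forall (pd pd' : 'I_m -> R) (p1 p1' : R) (ps pc ps' pc' : 'I_m -> R),
          is_NE D0 alpha beta pa pd p1 ps pc ->
          is_NE D0 alpha beta pa pd' p1' ps' pc' ->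
          (forall i, demand D0 alpha beta (price p1 ps pc) i
                     = demand D0 alpha beta (price p1' ps' pc') i)
          /\ p1 + pa ord0 = p1' + pa ord0
          /\ (forall j, ps j + pd j = ps' j + pd' j
                /\ pc j + pa (lift ord0 j) - pd j = pc' j + pa (lift ord0 j) - pd' j)
          /\ U_pair D0 alpha beta pa pd p1 ps pc = U_pair D0 alpha beta pa pd' p1' ps' pc'
          /\ (forall j, U_cp D0 alpha beta pa pd p1 ps pc j
                        = U_cp D0 alpha beta pa pd' p1' ps' pc' j)).
Proof.
exists (fun j => base_price m D0 alpha beta - eq_markup D0 alpha beta pa j / 2).
exists (eq_markup D0 alpha beta pa).
have NE_iff := is_NE_iff D0 pa hb hab.
split=> [pd | pd pd' p1 p1' ps pc ps' pc' NE NE'].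
  split; [|split].
  - exists (base_price m D0 alpha beta - pa ord0 / 2).
    exists (fun j => base_price m D0 alpha beta - eq_markup D0 alpha beta pa j / 2 - pd j).
    by exists (fun j => eq_markup D0 alpha beta pa j + pd j); apply/NE_iff.
  - move=> p1 p1' ps pc ps' pc' NE NE'; have [-> psE] := NE_invariant hb hab NE NE'.
    by split=> // j; have := psE j; lra.
  - by move=> p1 ps pc /NE_iff[-> psE]; rewrite addrC mulNr.
have [p1E psE] := NE_invariant hb hab NE NE'.
have demandE := NE_demand_invariant hb hab NE NE'.
have unit_rev j : ps j + pd j = ps' j + pd' j
    /\ pc j + pa (lift ord0 j) - pd j = pc' j + pa (lift ord0 j) - pd' j.
  by have := psE j; split; lra.
split=> //; split; first by rewrite p1E.
split=> //; split; last by move=> j; rewrite /U_cp demandE (unit_rev j).2.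
rewrite /U_pair; congr (_ + _); first by rewrite demandE p1E.
by apply: eq_bigr => j _; rewrite demandE (unit_rev j).1.
Qed.
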